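(* Let $p\ge1$ and $q\le k$ be reals such that $\frac kp+\frac{pq}2\le k$. For any set family $\mathcal S\subseteq2^{[k]}$ such that $|S|\ge\frac kp+\frac{pq}2$ for every $S\in\mathcal S$ and $|S\cap S'|\le q$ for any two distinct $S,S'\in\mathcal S$, it holds that $|\mathcal S|\le p$.
   Context: $[k]=\{1,\dots,k\}$ and $2^{[k]}$ is its power set. *)

(* [k] = {1..k} is modelled by the finite type 'I_k (k elements). *)
From HB Require Import structures.
From mathcomp Require Import all_boot all_order all_algebra.
Set Implicit Arguments. Unset Strict Implicit. Unset Printing Implicit Defensive.

From HB Require Import structures.
From mathcomp Require Import all_boot all_order all_algebra.
From mathcomp Require Import zify lra.
Set Implicit Arguments.
Unset Strict Implicit.
Unset Printing Implicit Defensive.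
Import Order.TTheory GRing.Theory Num.Theory.

(* Double counting over the ground set: if x lies in d_x members of the family,
   then sum_S |S| = sum_x d_x and sum_{S <> S'} |S :&: S'| = sum_x d_x (d_x - 1);
   since 3d - d^2 <= 2 for every natural d, this gives
   2 sum_S |S| - sum_{S <> S'} |S :&: S'| <= 2k.  For a subfamily with m members
   the size and intersection bounds turn this into
   2mk/p + mq(p - (m - 1)) <= 2k, so m - 1 <= p forces m <= p, and removing
   members one at a time bounds the whole family. *)

Lemma card_sum_mem (T : finType) (A : {pred T}) : #|A| = \sum_x (x \in A).
Proof. by rewrite -sum1_card big_mkcond; apply: eq_bigr => x _; case: (x \in A). Qed.

Section DoubleCounting.
Variables (T : finType) (G : {set {set T}}).

Definition degree (x : T) : nat := \sum_(S in G) (x \in S).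

Lemma sum_card_degree : \sum_(S in G) #|S| = \sum_x degree x.
Proof. by under eq_bigr do rewrite card_sum_mem; rewrite exchange_big. Qed.

Lemma sum_card_setI_degree :
  \sum_(S in G) \sum_(S' in G) #|S :&: S'| = \sum_x degree x ^ 2.
Proof.
under [RHS]eq_bigr do rewrite -mulnn big_distrlr.
rewrite [RHS]exchange_big; apply: eq_bigr => S _.
rewrite [RHS]exchange_big; apply: eq_bigr => S' _.
by rewrite card_sum_mem; apply: eq_bigr => x _; rewrite in_setI -mulnb.
Qed.

Lemma sum_card_le_sum_card_setI :
  2 * \sum_(S in G) #|S| <= 2 * #|T| + \sum_(S in G) \sum_(S' in G :\ S) #|S :&: S'|.
Proof.
have diag : \sum_(S in G) \sum_(S' in G) #|S :&: S'| =
    \sum_(S in G) #|S| + \sum_(S in G) \sum_(S' in G :\ S) #|S :&: S'|.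
  by rewrite -big_split; apply: eq_bigr => S SG; rewrite (big_setD1 S) //= setIid.
have pointwise : \sum_x 3 * degree x <= \sum_x (2 + degree x ^ 2).
  by apply: leq_sum => x _; case: (degree x) => [|[|d]] //; nia.
rewrite -big_distrr big_split sum_nat_const /= in pointwise.
change #|xpredT| with #|T| in pointwise.
move: diag pointwise; rewrite sum_card_setI_degree sum_card_degree; lia.
Qed.

End DoubleCounting.

Local Open Scope ring_scope.

Lemma card_family_bound (R : realDomainType) (T : finType) (G : {set {set T}}) (a q : R) :
    (forall S, S \in G -> a <= #|S|%:R) ->
    (forall S S', S \in G -> S' \in G -> S != S' -> #|S :&: S'|%:R <= q) ->
  2 * (#|G|%:R * a) <= 2 * #|T|%:R + #|G|%:R * ((#|G|%:R - 1) * q).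
Proof.
move=> card_ge card_setI_le.
have sizes : #|G|%:R * a <= \sum_(S in G) #|S|%:R.
  by rewrite mulr_natl -sumr_const ler_sum.
have overlaps : \sum_(S in G) \sum_(S' in G :\ S) #|S :&: S'|%:R
    <= #|G|%:R * ((#|G|%:R - 1) * q).
  rewrite mulr_natl -sumr_const; apply: ler_sum => S SG.
  have -> : (#|G|%:R - 1) * q = \sum_(S' in G :\ S) q.
    by rewrite sumr_const (cardsD1 S G) SG add1n -natr1 addrK mulr_natl.
  apply: ler_sum => S' /setD1P[S'S S'G].
  by rewrite card_setI_le // eq_sym.
have := sum_card_le_sum_card_setI G.
rewrite -(ler_nat R) natrD !natrM !natr_sum.
under [X in _ <= _ + X -> _]eq_bigr do rewrite natr_sum.
lra.
Qed.

Lemma le_of_counting_bound (R : realFieldType) (K p q m : R) :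
    0 < K -> 0 < p -> 0 <= q -> 0 <= m -> m - 1 <= p ->
    2 * (m * (K / p + p * q / 2)) <= 2 * K + m * ((m - 1) * q) ->
  m <= p.
Proof.
move=> K_gt0 p_gt0 q_ge0 m_ge0 m_le counting.
set x := K / p in counting.
have x_gt0 : 0 < x by rewrite divr_gt0.
have Kx : K = x * p by rewrite mulrVK // unitfE gt_eqF.
have slack : 0 <= m * q * (p - (m - 1)) by rewrite !mulr_ge0 // subr_ge0.
rewrite -(ler_pM2l x_gt0); nra.
Qed.

Lemma card_gt0_of_neq (T : finType) (A B : {set T}) : A != B -> (0 < #|T|)%N.
Proof.
apply: contraNT; rewrite -leqNgt leqn0 => /eqP/card0_eq T0.
by apply/eqP/setP => x; move: (T0 x); rewrite !inE.
Qed.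

Section BoundedIntersections.
Variables (R : realFieldType) (T : finType) (p q : R) (F : {set {set T}}).
Hypotheses (p_gt0 : 0 < p) (q_ge0 : 0 <= q) (T_gt0 : (0 < #|T|)%N).
Hypothesis card_ge : forall S, S \in F -> #|T|%:R / p + p * q / 2 <= #|S|%:R.
Hypothesis card_setI_le :
  forall S S', S \in F -> S' \in F -> S != S' -> #|S :&: S'|%:R <= q.

Lemma card_subfamily_le (G : {set {set T}}) : G \subset F -> #|G|%:R <= p.
Proof.
have [n] := ubnP #|G|; elim: n G => // n IH G /ltnSE G_le sGF.
have [->|[S SG]] := set_0Vmem G; first by rewrite cards0 ltW.
have G1_le : #|G|%:R - 1 <= p.
  rewrite (cardsD1 S G) SG add1n -natr1 addrK.
  apply: IH; first by rewrite (cardsD1 S G) SG in G_le.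
  exact: subset_trans (subsetDl G [set S]) sGF.
apply: (le_of_counting_bound (K := #|T|%:R) (q := q)); rewrite ?ltr0n ?ler0n //.
apply: card_family_bound => [S' /(subsetP sGF)/card_ge // | S1 S2 S1G S2G].
by apply: card_setI_le; apply: (subsetP sGF).
Qed.

End BoundedIntersections.

Theorem lemma3p8 (R : realFieldType) (k : nat) (p q : R)
  (hp : 1 <= p) (hq : q <= k%:R)
  (hpk : k%:R / p + p * q / 2 <= k%:R)
  (F : {set {set 'I_k}})
  (hsize : forall S, S \in F -> k%:R / p + p * q / 2 <= #|S|%:R)
  (hinter : forall S S', S \in F -> S' \in F -> S != S' -> #|S :&: S'|%:R <= q) :
  #|F|%:R <= p.
Proof.
have p_gt0 : 0 < p := lt_le_trans ltr01 hp.
have [F_le1 | F_gt1] := leqP #|F| 1.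
  by apply: le_trans hp; rewrite -(ler_nat R) in F_le1.
have /card_gt1P [S [S' [SF S'F SS']]] := F_gt1.
have q_ge0 : 0 <= q := le_trans (ler0n _ _) (hinter _ _ SF S'F SS').
apply: (card_subfamily_le p_gt0 q_ge0 (card_gt0_of_neq SS') _ hinter (subxx F)).
by rewrite card_ord.
Qed.
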